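(* Let $d\ge 1$ and $k\in\{1,2\}$. The domain $\mathfrak{D}(\mathcal{A}_k)$ of the arcsine transformation $\mathcal{A}_k$ equals $\mathfrak{M}_L^k(\mathbb{R}^d)$.
   Context: A Lévy measure on $\mathbb{R}^d$ is a measure $\nu$ with $\nu(\{0\})=0$ and $\int_{\mathbb{R}^d}(1\wedge|x|^2)\nu(\mathrm{d}x)<\infty$; their class is $\mathfrak{M}_L(\mathbb{R}^d)=\mathfrak{M}_L^2(\mathbb{R}^d)$, and $\mathfrak{M}_L^1(\mathbb{R}^d)$ is the class of Lévy measures with $\int(1\wedge|x|)\nu(\mathrm{d}x)<\infty$. For $s>0$ set $a_1(r;s)=2\pi^{-1}(s-r^2)^{-1/2}$ for $0<r<s^{1/2}$ and $0$ otherwise; $a_2(r;s)=2\pi^{-1}(s^2-r^2)^{-1/2}$ for $0<r<s$ and $0$ otherwise. For a measure $\nu$ on $\mathbb{R}^d$ with $\nu(\{0\})=0$ and $k=1,2$, define $\mathcal{A}_k(\nu)(B)=\int_{\mathbb{R}^d\setminus\{0\}}\nu(\mathrm{d}x)\int_0^\infty a_k(r;|x|)1_B(r x/|x|)\,\mathrm{d}r$ for Borel $B\subset\mathbb{R}^d$. The domain $\mathfrak{D}(\mathcal{A}_k)$ is the class of measures $\nu$ on $\mathbb{R}^d$ with $\nu(\{0\})=0$ such that $\mathcal{A}_k(\nu)$ is a Lévy measure in $\mathfrak{M}_L(\mathbb{R}^d)$. *)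

(* R^d is modelled as d.-tuple R, equipped with the
   library's product sigma-algebra (generated by the coordinate maps), which
   is the Borel sigma-algebra of R^d. *)
From HB Require Import structures.
From mathcomp Require Import all_boot all_order all_algebra.
From mathcomp Require Import all_classical all_reals all_analysis.
Set Implicit Arguments. Unset Strict Implicit. Unset Printing Implicit Defensive.
Import Order.TTheory GRing.Theory Num.Theory.
Import numFieldNormedType.Exports.
Local Open Scope classical_set_scope.
Local Open Scope ring_scope.

Section Defs.
Context {R : realType} {d : nat}.

Definition enorm (x : d.-tuple R) : R := Num.sqrt (\sum_(i < d) tnth x i ^+ 2).

Definition origin : d.-tuple R := [tuple (0 : R) | i < d].

Definition rdir (r : R) (x : d.-tuple R) : d.-tuple R :=
  [tuple r * (tnth x i / enorm x) | i < d].

End Defs.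

Definition a1 {R : realType} (r s : R) : R :=
  if (0 < r) && (r < Num.sqrt s) then 2 / pi * (Num.sqrt (s - r ^+ 2))^-1 else 0.
Definition a2 {R : realType} (r s : R) : R :=
  if (0 < r) && (r < s) then 2 / pi * (Num.sqrt (s ^+ 2 - r ^+ 2))^-1 else 0.

Definition akern {R : realType} (k : nat) : R -> R -> R :=
  if k == 1%N then a1 else a2.

(* M_L^k(R^d): nu({0}) = 0 and \int (1 /\ |x|^k) nu(dx) < oo.
   M_L(R^d) = M_L^2(R^d) is the class of Levy measures. *)
Definition levy_measure_k {R : realType} {d : nat} (k : nat)
  (nu : {measure set (d.-tuple R) -> \bar R}) : Prop :=
  nu [set origin] = 0%E /\
  (\int[nu]_x (Order.min 1 (enorm x ^+ k))%:E < +oo)%E.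

Definition arcsineA {R : realType} {d : nat} (k : nat)
  (nu : {measure set (d.-tuple R) -> \bar R}) (B : set (d.-tuple R)) : \bar R :=
  (\int[nu]_(x in ~` [set origin])
     \int[lebesgue_measure]_(r in `[0%R, +oo[)
        (akern k r (enorm x) * \1_B (rdir r x))%:E)%E.

(* nu is in the domain D(A_k): nu({0}) = 0 and A_k(nu) is (the restriction to
   Borel sets of) a Levy measure in M_L(R^d). *)
Definition in_domain_A {R : realType} {d : nat} (k : nat)
  (nu : {measure set (d.-tuple R) -> \bar R}) : Prop :=
  nu [set origin] = 0%E /\
  exists mu : {measure set (d.-tuple R) -> \bar R},
    (forall B, measurable B -> mu B = arcsineA k nu B) /\ levy_measure_k 2 mu.

From HB Require Import structures.
From mathcomp Require Import all_boot all_order all_algebra.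
From mathcomp Require Import all_classical all_reals all_analysis.
From mathcomp Require Import measurable_realfun ring lra.
Set Implicit Arguments. Unset Strict Implicit. Unset Printing Implicit Defensive.
Import Order.TTheory GRing.Theory Num.Theory.
Import numFieldNormedType.Exports HBNNSimple.
Local Open Scope classical_set_scope.
Local Open Scope ring_scope.

(* For nu({0}) = 0, A_k(nu) is the mixture over x of the measures carried by
   the ray through x with density a_k(r; |x|) dr.  Hence
     \int min(1, |y|^2) A_k(nu)(dy) = \int nu(dx) \int a_2(r; t) min(1, r^2) dr
   with t = |x|^(k/2), and the inner integral is bounded above and below by
   constant multiples of min(1, t^2) = min(1, |x|^k): from below by restricting
   to [t/2, t[, from above by cutting [0, t[ into layers accumulating at the
   singularity r = t.  Also A_k(nu)({0}) = 0 always, since rays avoid 0. *)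

Section arcsine_kernel.
Context {R : realType}.

Lemma measurable_inv : measurable_fun [set: R] (fun x : R => x^-1).
Proof.
have -> : [set: R] = [set 0] `|` ~` [set 0] by rewrite setUv.
apply/measurable_funU => //; first exact: measurableC.
split; first exact: measurable_fun_set1.
apply: open_continuous_measurable_fun.
  apply: closed_openC; apply: accessible_closed_set1.
  exact/hausdorff_accessible/Rhausdorff.
by move=> x; rewrite inE /= => /eqP x0; exact: inv_continuous.
Qed.

Lemma measurable_sqrt : measurable_fun [set: R] (@Num.sqrt R).
Proof. exact: continuous_measurable_fun (@sqrt_continuous R). Qed.

Lemma a2_ge0 (r s : R) : 0 <= a2 r s.
Proof.
rewrite /a2; case: ifP => // _.
by rewrite mulr_ge0 ?invr_ge0 ?sqrtr_ge0 // divr_ge0 // ltW // pi_gt0.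
Qed.

Lemma a2_eq0 (r s : R) : ~~ ((0 < r) && (r < s)) -> a2 r s = 0.
Proof. by rewrite /a2 => /negbTE ->. Qed.

Lemma a1_a2 (r s : R) : a1 r s = a2 r (Num.sqrt s).
Proof.
rewrite /a1 /a2; have [s0|s0] := leP 0 s; first by rewrite sqr_sqrtr.
by rewrite (ltr0_sqrtr s0); case: (ltrP 0 r) => // r0; rewrite [r < 0]ltNge ltW.
Qed.

(* s^(k/2), so that A_1 and A_2 share the kernel a_2 *)
Definition halfpow (k : nat) (s : R) : R := if k == 1%N then Num.sqrt s else s.

Lemma akernE k (r s : R) : akern k r s = a2 r (halfpow k s).
Proof. by rewrite /akern /halfpow; case: ifP => _; rewrite ?a1_a2. Qed.

Lemma akern_ge0 k (r s : R) : 0 <= akern k r s.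
Proof. by rewrite akernE a2_ge0. Qed.

Lemma akern_eq0 k (r s : R) : r <= 0 -> akern k r s = 0.
Proof. by move=> r0; rewrite akernE a2_eq0 // negb_and -leNgt r0. Qed.

Lemma halfpow_gt0 k (s : R) : 0 < s -> 0 < halfpow k s.
Proof. by move=> s0; rewrite /halfpow; case: ifP => // _; rewrite sqrtr_gt0. Qed.

Lemma min1_halfpow k (s : R) : (k = 1%N \/ k = 2%N) -> 0 <= s ->
  Order.min 1 (s ^+ k) = Order.min 1 (halfpow k s ^+ 2).
Proof. by move=> hk s0; rewrite /halfpow; case: hk => ->; rewrite ?sqr_sqrtr. Qed.

Lemma measurable_a2 : measurable_fun [set: R * R] (fun p : R * R => a2 p.1 p.2).
Proof.
rewrite /a2; apply: measurable_fun_ifT.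
- by apply: measurable_and; exact: measurable_fun_ltr.
- apply: measurable_funM => //.
  apply: measurableT_comp; first exact: measurable_inv.
  apply: measurableT_comp; first exact: measurable_sqrt.
  by apply: measurable_funB => //; exact: measurable_funX.
- exact: measurable_cst.
Qed.

Lemma measurable_akern k :
  measurable_fun [set: R * R] (fun p : R * R => akern k p.1 p.2).
Proof.
have -> : (fun p : R * R => akern k p.1 p.2) =
    (fun p : R * R => a2 p.1 p.2) \o (fun p => (p.1, halfpow k p.2)).
  by apply/funext => p; rewrite /= akernE.
apply: (measurableT_comp measurable_a2); apply: measurable_fun_pair => //.
rewrite /halfpow; case: (k == 1%N); last exact: measurable_snd.
exact: measurableT_comp measurable_sqrt measurable_snd.
Qed.

End arcsine_kernel.

Section euclidean.
Context {R : realType} {d : nat}.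
Local Notation T := (d.-tuple R).

Lemma enorm_ge0 (x : T) : 0 <= enorm x.
Proof. exact: sqrtr_ge0. Qed.

Lemma enorm_origin : enorm (@origin R d) = 0.
Proof. by rewrite /enorm big1 ?sqrtr0 // => i _; rewrite tnth_mktuple expr0n. Qed.

Lemma enorm_gt0 (x : T) : x <> origin -> 0 < enorm x.
Proof.
move=> xo; rewrite sqrtr_gt0 lt_def sumr_ge0 ?andbT => [|i _]; last exact: sqr_ge0.
apply: contra_notN xo => /eqP sum0; apply: eq_from_tnth => i.
rewrite /origin tnth_mktuple.
have /eqP := psumr_eq0P (fun i _ => sqr_ge0 (tnth x i)) sum0 (i := i) isT.
by rewrite sqrf_eq0 => /eqP.
Qed.

Lemma enorm_rdir (x : T) r : x <> origin -> 0 <= r -> enorm (rdir r x) = r.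
Proof.
move=> xo r0; have /lt0r_neq0 ex0 := enorm_gt0 xo.
have sumE : \sum_(i < d) tnth x i ^+ 2 = enorm x ^+ 2.
  by rewrite sqr_sqrtr // sumr_ge0 // => i _; exact: sqr_ge0.
rewrite {1}/enorm (eq_bigr (fun i => (r / enorm x) ^+ 2 * tnth x i ^+ 2)).
  by rewrite -mulr_sumr sumE -exprMn divfK // sqrtr_sqr ger0_norm.
by move=> i _; rewrite /rdir tnth_mktuple mulrCA exprMn mulrC.
Qed.

Lemma measurable_enorm : measurable_fun [set: T] (@enorm R d).
Proof.
apply: measurableT_comp; first exact: measurable_sqrt.
by apply: measurable_sum => i; apply: measurable_funX; exact: measurable_tnth.
Qed.

Lemma measurable_rdir : measurable_fun [set: T * R] (fun p : T * R => rdir p.2 p.1).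
Proof.
apply/measurable_fun_tnthP => i /=; rewrite /comp /rdir.
under eq_fun do rewrite tnth_mktuple.
apply: measurable_funM => //; apply: measurable_funM.
  exact: measurableT_comp (measurable_tnth i) measurable_fst.
apply: measurableT_comp; first exact: measurable_inv.
exact: measurableT_comp measurable_enorm measurable_fst.
Qed.

Lemma measurable_origin : measurable [set (@origin R d)].
Proof.
have -> : [set (@origin R d)] = enorm @^-1` [set 0].
  apply/seteqP; split => [x -> | x /= x0]; first by rewrite /= enorm_origin.
  by apply: contrapT => /enorm_gt0; rewrite x0 ltxx.
rewrite -[X in measurable X]setTI.
by apply: measurable_enorm => //; exact: measurable_set1.
Qed.

Lemma measurable_punctured : measurable (~` [set (@origin R d)]).
Proof. exact: measurableC measurable_origin. Qed.

End euclidean.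

Section kernel_integral.
Context {R : realType} {d : nat} (k : nat).
Local Notation T := (d.-tuple R).
Local Notation D := (~` [set (@origin R d)]).

(* The integral of g against the measure with density a_k(r; |x|) dr on the
   ray through x; A_k(nu) is the nu-mixture of these measures (arcsineAE). *)
Definition kernel_integral (g : T -> R) (x : T) : \bar R :=
  (\int[lebesgue_measure]_r (akern k r (enorm x) * g (rdir r x))%:E)%E.

Lemma measurable_kernel_integrand (g : T -> R) : measurable_fun setT g ->
  measurable_fun [set: T * R]
    (fun p : T * R => (akern k p.2 (enorm p.1) * g (rdir p.2 p.1))%:E).
Proof.
move=> mg; apply/measurable_EFinP; apply: measurable_funM.
  have -> : (fun p : T * R => akern k p.2 (enorm p.1)) =
      (fun q : R * R => akern k q.1 q.2) \o (fun p => (p.2, enorm p.1)) by [].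
  apply: (measurableT_comp (measurable_akern k)); apply: measurable_fun_pair => //.
  exact: measurableT_comp measurable_enorm measurable_fst.
exact: measurableT_comp mg measurable_rdir.
Qed.

Lemma measurable_kernel_integrand_section (g : T -> R) x : measurable_fun setT g ->
  measurable_fun [set: R] (fun r => (akern k r (enorm x) * g (rdir r x))%:E).
Proof.
by move=> mg; exact: measurable_fun_pair2 x (measurable_kernel_integrand mg).
Qed.

Lemma kernel_integrand_ge0 (g : T -> R) x r : (forall y, 0 <= g y) ->
  (0 <= (akern k r (enorm x) * g (rdir r x))%:E)%E.
Proof. by move=> g0; rewrite lee_fin mulr_ge0 ?akern_ge0. Qed.

Lemma kernel_integral_ge0 (g : T -> R) x : (forall y, 0 <= g y) ->
  (0 <= kernel_integral g x)%E.
Proof. by move=> g0; apply: integral_ge0 => r _; exact: kernel_integrand_ge0. Qed.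

Lemma measurable_kernel_integral (g : T -> R) :
  measurable_fun setT g -> (forall y, 0 <= g y) ->
  measurable_fun [set: T] (kernel_integral g).
Proof.
move=> mg g0; have -> : kernel_integral g = fubini_F lebesgue_measure
    (fun p : T * R => (akern k p.2 (enorm p.1) * g (rdir p.2 p.1))%:E) by [].
apply: measurable_fun_fubini_tonelli_F; first exact: measurable_kernel_integrand.
by move=> p; exact: kernel_integrand_ge0.
Qed.

Lemma le_kernel_integral (f g : T -> R) x :
  measurable_fun setT f -> measurable_fun setT g ->
  (forall y, 0 <= f y) -> (forall y, f y <= g y) ->
  (kernel_integral f x <= kernel_integral g x)%E.
Proof.
move=> mf mg f0 fg; apply: ge0_le_integral => //.
- by move=> r _; exact: kernel_integrand_ge0.
- exact: measurable_kernel_integrand_section.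
- exact: measurable_kernel_integrand_section.
- by move=> r _; rewrite lee_fin ler_wpM2l ?akern_ge0.
Qed.

Lemma kernel_integral_monotone_convergence (f : (T -> R)^nat) (g : T -> R) x :
  (forall n, measurable_fun setT (f n)) -> (forall n y, 0 <= f n y) ->
  (forall y, nondecreasing_seq (f ^~ y)) ->
  (forall y, (f n y)%:E @[n --> \oo] --> (g y)%:E) ->
  kernel_integral g x = limn (fun n => kernel_integral (f n) x).
Proof.
move=> mf f0 nd_f fg; rewrite /kernel_integral -monotone_convergence //.
- apply: eq_integral => r _; apply/esym/cvg_lim => //.
  under eq_fun do rewrite EFinM.
  by rewrite EFinM; apply: cvgeZl => //; exact: fg.
- by move=> n; exact: measurable_kernel_integrand_section.
- by move=> n r _; exact: kernel_integrand_ge0.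
- by move=> r _ m n mn; rewrite lee_fin ler_wpM2l ?akern_ge0 ?nd_f.
Qed.

Lemma arcsineAE (nu : {measure set T -> \bar R}) B :
  arcsineA k nu B = (\int[nu]_(x in D) kernel_integral \1_B x)%E.
Proof.
apply: eq_integral => x _; rewrite integral_mkcond; apply: eq_integral => r _.
rewrite patchE; case: ifPn => // /negP; rewrite inE /= in_itv /= andbT => /negP.
by rewrite -ltNge => /ltW r0; rewrite akern_eq0 ?mul0r.
Qed.

Lemma kernel_integral_indic0 x : kernel_integral \1_(@set0 T) x = 0%E.
Proof. by apply: integral0_eq => r _; rewrite indic0 mulr0. Qed.

Lemma kernel_integral_bigcup (F : (set T)^nat) x :
  (forall n, measurable (F n)) -> trivIset setT F ->
  kernel_integral \1_(\bigcup_n F n) x = (\sum_(n <oo) kernel_integral \1_(F n) x)%E.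
Proof.
move=> mF tF; rewrite /kernel_integral -integral_nneseries //; last 2 first.
- by move=> n; apply: measurable_kernel_integrand_section; exact: measurable_indic.
- by move=> n r _; exact: kernel_integrand_ge0.
by apply: eq_integral => r _; rewrite EFinM indic_bigcup // -nneseriesZl.
Qed.

Lemma kernel_integral_origin x : x <> origin ->
  kernel_integral \1_[set origin] x = 0%E.
Proof.
move=> xo; apply: integral0_eq => r _; have [r0|r0] := leP r 0.
  by rewrite akern_eq0 ?mul0r.
rewrite indicE memNset ?mulr0 //= => rdir0.
have := enorm_rdir xo (ltW r0); rewrite rdir0 enorm_origin => r_eq0.
by rewrite -r_eq0 ltxx in r0.
Qed.

Lemma kernel_integral_nnsfun (f : {nnsfun T >-> R}) x :
  kernel_integral f x =
  (\sum_(r \in range f) r%:E * kernel_integral \1_(f @^-1` [set r]) x)%E.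
Proof.
have mfr r : measurable_fun setT (fun y => r * \1_(f @^-1` [set r]) y).
  by apply: measurable_funM => //; exact: measurable_indic.
rewrite /kernel_integral.
under eq_integral do rewrite fimfunE mulr_fsumr -fsumEFin //.
rewrite ge0_integral_fsum //; last 2 first.
- by move=> r; exact: measurable_kernel_integrand_section _ x (mfr r).
- move=> r z _; rewrite lee_fin mulr_ge0 ?akern_ge0 //.
  by have := nnfun_muleindic_ge0 f r (rdir z x); rewrite -EFinM lee_fin.
apply: eq_fsbigr => r /set_mem [y _ <-].
under eq_integral do rewrite mulrCA EFinM.
rewrite ge0_integralZl //; last by rewrite lee_fin.
- by apply: measurable_kernel_integrand_section; exact: measurable_indic.
- by move=> z _; exact: kernel_integrand_ge0.
Qed.

End kernel_integral.

Section arcsine_measure.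
Context {R : realType} {d : nat} (k : nat) (nu : {measure set (d.-tuple R) -> \bar R}).
Local Notation T := (d.-tuple R).

Definition arcsine_measure (B : set T) : \bar R := arcsineA k nu B.

Let arcsine_measure0 : arcsine_measure set0 = 0%E.
Proof.
rewrite /arcsine_measure arcsineAE; apply: integral0_eq => x _.
exact: kernel_integral_indic0.
Qed.

Let arcsine_measure_ge0 B : (0 <= arcsine_measure B)%E.
Proof.
rewrite /arcsine_measure arcsineAE; apply: integral_ge0 => x _.
by apply: kernel_integral_ge0 => y; rewrite indicE.
Qed.

Let arcsine_measure_sigma_additive : semi_sigma_additive arcsine_measure.
Proof.
move=> F mF tF _; rewrite /arcsine_measure arcsineAE.
under eq_integral do rewrite kernel_integral_bigcup //.
rewrite integral_nneseries //; last 3 first.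
- exact: measurable_punctured.
- by move=> n; apply: measurable_funS (measurable_kernel_integral _ _ _) => //.
- by move=> n x _; apply: kernel_integral_ge0 => y; rewrite indicE.
under eq_eseriesr do rewrite -arcsineAE.
apply: is_cvg_nneseries => n _ _; exact: arcsine_measure_ge0.
Qed.

HB.instance Definition _ := isMeasure.Build _ T R arcsine_measure
  arcsine_measure0 arcsine_measure_ge0 arcsine_measure_sigma_additive.

Lemma arcsine_measure_origin : arcsine_measure [set origin] = 0%E.
Proof.
rewrite /arcsine_measure arcsineAE; apply: integral0_eq => x xo.
exact: kernel_integral_origin.
Qed.

End arcsine_measure.

Section change_of_variables.
Context {R : realType} {d : nat} (k : nat).
Context (nu mu : {measure set (d.-tuple R) -> \bar R}).
Local Notation T := (d.-tuple R).
Local Notation D := (~` [set (@origin R d)]).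
Hypothesis mu_arcsine : forall B, measurable B -> mu B = arcsineA k nu B.

Let integral_nnsfun_arcsine (f : {nnsfun T >-> R}) :
  (\int[mu]_y (f y)%:E = \int[nu]_(x in D) kernel_integral k f x)%E.
Proof.
have term_ge0 r x : (0 <= r%:E * kernel_integral k \1_(f @^-1` [set r]) x)%E.
  have [r0|r0] := ltP r 0.
    by rewrite preimage_nnfun0 // kernel_integral_indic0 mule0.
  by rewrite mule_ge0 // kernel_integral_ge0 // => y; rewrite indicE.
under [RHS]eq_integral do rewrite kernel_integral_nnsfun.
rewrite integralT_nnsfun sintegralE ge0_integral_fsum //; last 2 first.
- exact: measurable_punctured.
- move=> r; apply: measurable_funeM.
  by apply: measurable_funS (measurable_kernel_integral _ _ _) => //.
apply: eq_fsbigr => r /set_mem [y _ <-].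
rewrite mu_arcsine // arcsineAE ge0_integralZl //; last by rewrite lee_fin.
- exact: measurable_punctured.
- by apply: measurable_funS (measurable_kernel_integral _ _ _) => //.
- by move=> x _; apply: kernel_integral_ge0 => z; rewrite indicE.
Qed.

Lemma integral_arcsine (g : T -> R) : measurable_fun setT g -> (forall y, 0 <= g y) ->
  (\int[mu]_y (g y)%:E = \int[nu]_(x in D) kernel_integral k g x)%E.
Proof.
move=> mg g0; have mEg : measurable_fun setT (EFin \o g) by exact/measurable_EFinP.
pose f := nnsfun_approx measurableT mEg.
have f_cvg y : (f n y)%:E @[n --> \oo] --> (g y)%:E.
  by apply: (cvg_nnsfun_approx measurableT mEg) => // z _; rewrite lee_fin.
have f_nd y : nondecreasing_seq (f ^~ y).
  by move=> m n mn; exact/lefP/nd_nnsfun_approx.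
transitivity (limn (fun n => \int[mu]_y (f n y)%:E))%E.
  rewrite -monotone_convergence //; last 3 first.
  - by move=> n; exact/measurable_EFinP.
  - by move=> n y _; rewrite lee_fin.
  - by move=> y _ m n mn; rewrite lee_fin f_nd.
  by apply: eq_integral => y _; apply/esym/cvg_lim => //; exact: f_cvg.
under eq_fun do rewrite integral_nnsfun_arcsine.
rewrite -monotone_convergence //; last 4 first.
- exact: measurable_punctured.
- by move=> n; apply: measurable_funS (measurable_kernel_integral _ _ _) => //.
- by move=> n x _; exact: kernel_integral_ge0.
- by move=> x _ m n mn; apply: le_kernel_integral => // y; exact: f_nd.
apply: eq_integral => x _.
by apply/esym/kernel_integral_monotone_convergence => // n; exact: measurable_funP.
Qed.

End change_of_variables.

Lemma integral_scaled_indic_itv {R : realType} (c a b : R) : 0 <= c -> a < b ->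
  (\int[lebesgue_measure]_r (c * \1_[set` `[a, b[] r)%:E = (c * (b - a))%:E)%E.
Proof.
move=> c0 ab; under eq_integral do rewrite EFinM.
rewrite ge0_integralZl //; last by apply/measurable_EFinP; exact: measurable_indic.
rewrite integral_indic // setIT.
rewrite -[X in (_ * X)%E]/(lebesgue_measure _) lebesgue_measure_itv /=.
by rewrite lte_fin ab -EFinD.
Qed.

Section arcsine_moment.
Context {R : realType} (t : R).
Hypothesis t_gt0 : 0 < t.
Local Notation c := (2 / pi : R).
Local Notation m := (Order.min 1 (t ^+ 2)).

Let c_gt0 : 0 < c.
Proof. by rewrite divr_gt0 ?pi_gt0. Qed.

Let m_ge0 : 0 <= m.
Proof. by rewrite le_min ler01 sqr_ge0. Qed.

Let measurable_integrand :
  measurable_fun [set: R] (fun r => (a2 r t * Order.min 1 (r ^+ 2))%:E).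
Proof.
apply/measurable_EFinP; apply: measurable_funM.
  exact: measurable_fun_pair1 t measurable_a2.
by apply: measurable_minr => //; exact: measurable_funX.
Qed.

Let integrand_ge0 r : (0 <= (a2 r t * Order.min 1 (r ^+ 2))%:E)%E.
Proof. by rewrite lee_fin mulr_ge0 ?a2_ge0 // le_min ler01 sqr_ge0. Qed.

Let a2_sqr_ge_indic r :
  c / t * (m / 4) * \1_[set` `[t / 2, t[] r <= a2 r t * Order.min 1 (r ^+ 2).
Proof.
rewrite indicE; case: (boolP (r \in _)) => [|_]; last first.
  by rewrite mulr0 mulr_ge0 ?a2_ge0 // le_min ler01 sqr_ge0.
rewrite inE /= in_itv /= mulr1 => /andP[tr rt].
have r_gt0 : 0 < r by apply: lt_le_trans tr; rewrite divr_gt0.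
have s_gt0 : 0 < Num.sqrt (t ^+ 2 - r ^+ 2) by rewrite sqrtr_gt0; nra.
have s_le : Num.sqrt (t ^+ 2 - r ^+ 2) <= t.
  by rewrite -[leRHS](ger0_norm (ltW t_gt0)) -sqrtr_sqr ler_sqrt ?sqr_ge0 //; nra.
have tr2 : t <= 2 * r by rewrite -ler_pdivrMl // mulrC.
rewrite /a2 r_gt0 rt; apply: ler_pM.
- by rewrite divr_ge0 // ltW.
- by rewrite divr_ge0.
- by rewrite ler_pM2l // lef_pV2.
- have m_le1 : m <= 1 by rewrite ge_min lexx.
  have m_le_sqr : m <= t ^+ 2 by rewrite ge_min lexx orbT.
  by rewrite le_min; apply/andP; split; [lra | nra].
Qed.

Lemma integral_a2_sqr_ge :
  ((c / 8 * m)%:E <= \int[lebesgue_measure]_r (a2 r t * Order.min 1 (r ^+ 2))%:E)%E.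
Proof.
have coef_ge0 : 0 <= c / t * (m / 4) by rewrite mulr_ge0 // divr_ge0 // ltW.
apply: (@le_trans _ _
    (\int[lebesgue_measure]_r (c / t * (m / 4) * \1_[set` `[t / 2, t[] r)%:E)%E).
  rewrite integral_scaled_indic_itv //; last by rewrite ltr_pdivrMr // ltr_pMr // ltr1n.
  suff -> : c / t * (m / 4) * (t - t / 2) = c / 8 * m by [].
  have := pi_gt0 R; move: (pi : R) => p p_gt0.
  by field; rewrite !lt0r_neq0.
apply: ge0_le_integral => //.
- by move=> r _; rewrite lee_fin mulr_ge0 // indicE.
- by apply/measurable_EFinP; apply: measurable_funM => //; exact: measurable_indic.
- by move=> r _; rewrite lee_fin a2_sqr_ge_indic.
Qed.

(* Each r in ]0, t[ lies in a layer [t - t/4^n, t[ with t - r > t/4^(n+1),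
   where a_2(r; t) <= c 2^(n+1) / t; the layer has length t/4^n, so summing
   over n gives a geometric series of ratio 1/2. *)
Let layer n : set R := [set` `[t - t / 4 ^+ n, t[].

Let exists_layer r : 0 < r -> r < t ->
  exists n, layer n r /\ t / 4 ^+ n.+1 < t - r.
Proof.
move=> r_gt0 rt; have tr_gt0 : 0 < t - r by rewrite subr_gt0.
have exP : exists n, t / 4 ^+ n.+1 < t - r.
  have /archi_boundP := divr_ge0 (ltW t_gt0) (ltW tr_gt0).
  set N := Num.Def.archi_bound _ => tN; exists N.
  rewrite ltr_pdivrMr ?exprn_gt0 // -ltr_pdivrMl // mulrC.
  apply: lt_trans tN _; rewrite -natrX ltr_nat.
  exact: ltn_trans (ltnSn N) (ltn_expl _ (isT : 1 < 4)%N).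
case: (ex_minnP exP) => M PM minM; exists M; split => //.
rewrite /layer /= in_itv /= rt andbT; case: M PM minM => [|M] PM minM.
  by rewrite expr0 divr1 subrr ltW.
have : ~~ (t / 4 ^+ M.+1 < t - r) by apply/negP => /minM; rewrite ltnn.
by rewrite -leNgt; lra.
Qed.

Let a2_le_layer n r : 0 < r -> t / 4 ^+ n.+1 < t - r ->
  a2 r t <= c * (2 ^+ n.+1 / t).
Proof.
move=> r_gt0; set u := t / 4 ^+ n.+1 => ut.
have u_gt0 : 0 < u by rewrite divr_gt0 ?exprn_gt0.
have rt : r < t by lra.
have q_gt0 : 0 < (2 : R) ^+ n.+1 by rewrite exprn_gt0.
have s_gt0 : 0 < Num.sqrt (t ^+ 2 - r ^+ 2) by rewrite sqrtr_gt0; nra.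
have tq_ge0 : 0 <= t / 2 ^+ n.+1 by rewrite divr_ge0 // ltW.
have sqr_tq : (t / 2 ^+ n.+1) ^+ 2 = t * u.
  rewrite /u (_ : 4 = 2 * 2) ?exprMn; first by field; exact: lt0r_neq0.
  by rewrite -natrM.
rewrite /a2 r_gt0 rt ler_pM2l // -invf_div lef_pV2 ?posrE ?divr_gt0 //.
by rewrite -(ger0_norm tq_ge0) -sqrtr_sqr ler_sqrt ?sqr_tq; nra.
Qed.

Let layer_term n r : R := m * (c * (2 ^+ n.+1 / t)) * \1_(layer n) r.

Let layer_coef_ge0 n : 0 <= m * (c * (2 ^+ n.+1 / t)).
Proof.
apply: mulr_ge0 => //; apply: mulr_ge0; first exact: ltW.
by rewrite divr_ge0 ?exprn_ge0 // ltW.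
Qed.

Let layer_term_ge0 n r : (0 <= (layer_term n r)%:E)%E.
Proof. by rewrite lee_fin mulr_ge0 ?indicE. Qed.

Let a2_sqr_le_series r :
  ((a2 r t * Order.min 1 (r ^+ 2))%:E <= \sum_(n <oo) (layer_term n r)%:E)%E.
Proof.
case: (boolP ((0 < r) && (r < t))) => [/andP[r_gt0 rt]|out]; last first.
  by rewrite a2_eq0 // mul0r; apply: nneseries_ge0 => n _ _.
have [n [rn ut]] := exists_layer r_gt0 rt.
apply: (@le_trans _ _ (layer_term n r)%:E).
  rewrite /layer_term indicE mem_set // mulr1 lee_fin mulrC.
  apply: ler_pM; rewrite ?a2_ge0 ?le_min ?ler01 ?sqr_ge0 ?a2_le_layer //.
  by rewrite ge_min lexx /= ge_min; apply/orP; right; nra.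
apply: le_trans (nneseries_lim_ge n.+1 _) => //.
by rewrite big_nat_recr //= leeDr // sume_ge0.
Qed.

Let integral_layer_term n :
  (\int[lebesgue_measure]_r (layer_term n r)%:E = (4 * c * m / (2 ^ (n + 1))%:R)%:E)%E.
Proof.
have q_gt0 : 0 < (2 : R) ^+ n by rewrite exprn_gt0.
rewrite integral_scaled_indic_itv //; last by rewrite ltrBlDr ltrDl divr_gt0 ?exprn_gt0.
suff -> : m * (c * (2 ^+ n.+1 / t)) * (t - (t - t / 4 ^+ n)) =
  4 * c * m / (2 ^ (n + 1))%:R by [].
rewrite natrX addn1 (_ : 4 = 2 * 2) ?exprMn; last by rewrite -natrM.
have := pi_gt0 R; move: (pi : R) => p p_gt0.
by rewrite [2 ^+ n.+1]exprS; field; rewrite !lt0r_neq0.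
Qed.

Lemma integral_a2_sqr_le :
  (\int[lebesgue_measure]_r (a2 r t * Order.min 1 (r ^+ 2))%:E <= (4 * c * m)%:E)%E.
Proof.
have measurable_layer_term n : measurable_fun setT (fun r => (layer_term n r)%:E).
  rewrite /layer_term /layer; apply/measurable_EFinP.
  by apply: measurable_funM => //; exact: measurable_indic.
apply: (@le_trans _ _ (\int[lebesgue_measure]_r \sum_(n <oo) (layer_term n r)%:E)%E).
  apply: ge0_le_integral => //.
  apply: ge0_emeasurable_sum => [n r _ _|n _]; first exact: layer_term_ge0.
  exact: measurable_layer_term.
rewrite integral_nneseries //; under eq_eseriesr do rewrite integral_layer_term.
by rewrite (cvg_lim _ (@cvg_geometric_eseries_half _ _ 0)) // expr0 divr1.
Qed.

End arcsine_moment.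

Lemma ge0_integral_fin_comparable d0 (X : measurableType d0) (R : realType)
    (mu : {measure set X -> \bar R}) (D : set X) (f g : X -> \bar R) (a b : R) :
  measurable D -> measurable_fun D f -> measurable_fun D g ->
  (forall x, D x -> 0 <= f x)%E -> 0 < a -> 0 <= b ->
  (forall x, D x -> a%:E * f x <= g x <= b%:E * f x)%E ->
  (\int[mu]_(x in D) f x < +oo <-> \int[mu]_(x in D) g x < +oo)%E.
Proof.
move=> mD mf mg f0 a_gt0 b_ge0 fg.
have ainv_ge0 : 0 <= a^-1 by rewrite invr_ge0 ltW.
have g0 x : D x -> (0 <= g x)%E.
  move=> Dx; have /andP[+ _] := fg x Dx; apply: le_trans.
  by rewrite mule_ge0 ?f0 // lee_fin ltW.
split => fin.
- apply: le_lt_trans (_ : _ <= b%:E * \int[mu]_(x in D) f x)%E _.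
    rewrite -ge0_integralZl // ?lee_fin //; apply: ge0_le_integral => //.
    + exact: measurable_funeM.
    + by move=> x Dx; have /andP[] := fg x Dx.
  exact: lte_mul_pinfty.
- apply: le_lt_trans (_ : _ <= a^-1%:E * \int[mu]_(x in D) g x)%E _.
    rewrite -ge0_integralZl // ?lee_fin //; apply: ge0_le_integral => //.
    + exact: measurable_funeM.
    + move=> x Dx; have /andP[afg _] := fg x Dx.
      rewrite -[f x]mul1e -(mulVf (lt0r_neq0 a_gt0)) EFinM -muleA.
      by rewrite lee_wpmul2l // lee_fin.
  by apply: lte_mul_pinfty; rewrite ?lee_fin.
Qed.

Section levy_integral.
Context {R : realType} {d : nat}.
Local Notation T := (d.-tuple R).
Local Notation D := (~` [set (@origin R d)]).

Definition levy_weight (k : nat) (y : T) : R := Order.min 1 (enorm y ^+ k).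

Lemma measurable_levy_weight k : measurable_fun [set: T] (levy_weight k).
Proof.
apply: measurable_minr => //.
by apply: measurable_funX; exact: measurable_enorm.
Qed.

Lemma levy_weight_ge0 k y : 0 <= levy_weight k y.
Proof. by rewrite le_min ler01 exprn_ge0 ?enorm_ge0. Qed.

Lemma kernel_integral_levy_weight k x : x <> origin ->
  kernel_integral k (levy_weight 2) x =
  (\int[lebesgue_measure]_r (a2 r (halfpow k (enorm x)) * Order.min 1 (r ^+ 2))%:E)%E.
Proof.
move=> xo; apply: eq_integral => r _; rewrite akernE; have [r0|r0] := leP r 0.
  by rewrite a2_eq0 ?mul0r // negb_and -leNgt r0.
by rewrite /levy_weight enorm_rdir // ltW.
Qed.

Lemma kernel_integral_levy_weight_bounds k x : (k = 1%N \/ k = 2%N) -> x <> origin ->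
  ((2 / pi / 8 * levy_weight k x)%:E <= kernel_integral k (levy_weight 2) x <=
   (4 * (2 / pi) * levy_weight k x)%:E)%E.
Proof.
move=> hk xo; rewrite kernel_integral_levy_weight // /levy_weight.
rewrite min1_halfpow ?enorm_ge0 //.
have t_gt0 : 0 < halfpow k (enorm x) by apply/halfpow_gt0/enorm_gt0.
by rewrite integral_a2_sqr_ge ?integral_a2_sqr_le.
Qed.

Lemma levy_integral_arcsine k (nu mu : {measure set T -> \bar R}) :
  (k = 1%N \/ k = 2%N) -> nu [set origin] = 0%E ->
  (forall B, measurable B -> mu B = arcsineA k nu B) ->
  (\int[mu]_x (levy_weight 2 x)%:E < +oo <-> \int[nu]_x (levy_weight k x)%:E < +oo)%E.
Proof.
move=> hk nu0 mu_arcsine.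
have mw j : measurable_fun [set: T] (fun x => (levy_weight j x)%:E).
  by apply/measurable_EFinP; exact: measurable_levy_weight.
have nu_punctured : (\int[nu]_x (levy_weight k x)%:E =
    \int[nu]_(x in D) (levy_weight k x)%:E)%E.
  rewrite (ge0_negligible_integral measurable_origin measurableT (mw k) _ nu0) ?setTD //.
  by move=> x _; rewrite lee_fin levy_weight_ge0.
rewrite (integral_arcsine mu_arcsine (measurable_levy_weight 2) (levy_weight_ge0 2)).
rewrite nu_punctured; apply: iff_sym.
apply: (ge0_integral_fin_comparable nu (a := 2 / pi / 8) (b := 4 * (2 / pi))).
- exact: measurable_punctured.
- exact: measurable_funS (mw k).
- apply: measurable_funS (measurable_kernel_integral _ _ _) => //.
    exact: measurable_levy_weight.
  exact: levy_weight_ge0.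
- by move=> x _; rewrite lee_fin levy_weight_ge0.
- by rewrite !divr_gt0 ?pi_gt0.
- by rewrite mulr_ge0 // divr_ge0 // ltW // pi_gt0.
- by move=> x; exact: kernel_integral_levy_weight_bounds.
Qed.

End levy_integral.

Theorem theorem2p2 (R : realType) (d : nat) (k : nat) :
  (1 <= d)%N -> (k = 1%N \/ k = 2%N) ->
  forall nu : {measure set (d.-tuple R) -> \bar R},
    in_domain_A k nu <-> levy_measure_k k nu.
Proof.
move=> _ hk nu; split.
- move=> [nu0 [mu [mu_arcsine [_ mu_fin]]]]; split => //.
  exact/(levy_integral_arcsine hk nu0 mu_arcsine).
- move=> [nu0 nu_fin]; split => //; exists (arcsine_measure k nu).
  split => //; split; first exact: arcsine_measure_origin.
  exact/(levy_integral_arcsine (mu := arcsine_measure k nu) hk nu0).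
Qed.
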